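(* Let $K$ be a biquadratic bicyclic number field. Then $$(\{\rho_0\mathcal{O}_K:\rho_0\in K,\ \rho_0^2\in\mathbb{Q}\}:j_{\mathbb{Q}}^K(\mathcal P_{\mathbb{Q}}))=\begin{cases}4&\text{if }\sqrt{-1}\notin K,\\2&\text{if }\sqrt{-1}\in K.\end{cases}$$
   Context: $j_{\mathbb{Q}}^K(\mathcal P_{\mathbb{Q}})=\{x\mathcal{O}_K:x\in\mathbb{Q}^\times\}$, the group of fractional ideals of $K$ generated by nonzero rationals; both groups are subgroups of the group of nonzero fractional ideals of $K$. *)

From HB Require Import structures.
From mathcomp Require Import all_boot all_order all_algebra all_field.
Set Implicit Arguments. Unset Strict Implicit. Unset Printing Implicit Defensive.
Import Order.TTheory GRing.Theory Num.Theory.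
Local Open Scope ring_scope.

Section NF.
Variable K : fieldExtType rat.

Definition is_rat (x : K) : Prop := exists r : rat, x = r%:A.

Definition biquadratic : Prop :=
  \dim {:K} = 4%N /\
  exists a b : K, is_rat (a ^+ 2) /\ is_rat (b ^+ 2) /\
    (span [:: 1; a; b; a * b] = fullv).

Definition OK (x : K) : Prop :=
  exists p : {poly int}, p \is monic /\ root (map_poly (fun z : int => z%:~R : K) p) x.

Definition pideal (a : K) : K -> Prop := fun y => exists o, OK o /\ y = a * o.

(* the set x I = (x O_K) I for a rational x and a fractional ideal I *)
Definition rscale (x : rat) (I : K -> Prop) : K -> Prop :=
  fun y => exists z, I z /\ y = x%:A * z.

Definition sqrt_rat_elt (rho : K) : Prop := rho != 0 /\ is_rat (rho ^+ 2).

Definition same_coset (rho sigma : K) : Prop :=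
  exists x : rat, x != 0 /\ forall y, pideal rho y <-> rscale x (pideal sigma) y.

Definition index_eq (n : nat) : Prop :=
  exists s : seq K, size s = n /\
    (forall i, (i < n)%N -> sqrt_rat_elt (nth 0 s i)) /\
    (forall i j, (i < n)%N -> (j < n)%N -> i <> j ->
       ~ same_coset (nth 0 s i) (nth 0 s j)) /\
    (forall rho, sqrt_rat_elt rho -> exists2 i, (i < n)%N & same_coset rho (nth 0 s i)).

End NF.

From mathcomp Require Import all_boot all_order all_algebra all_field.
From mathcomp Require Import ring.
Import Order.TTheory GRing.Theory Num.Theory.
Set Implicit Arguments.
Unset Strict Implicit.
Unset Printing Implicit Defensive.
Local Open Scope ring_scope.

(* Write K = Q(a, b) with a^2 = alpha, b^2 = beta, so that 1, a, b, ab is a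
   basis.  If rho^2 is rational, the non-constant coordinates of rho^2 vanish,
   and since alpha * beta is not a rational square this forces rho to be a
   rational multiple of a single monomial a^k1 b^k2, (k1, k2) in (Z/2)^2.
   If rho O_K = x sigma O_K for two such elements and a rational x, then
   u = rho / (x sigma) is a unit of O_K with u^2 rational; u^2 and u^-2 are
   rational algebraic integers, hence u^2 = 1 or u^2 = -1.  So without
   sqrt(-1) in K the four monomials lie in distinct cosets, whereas if
   sqrt(-1) is a rational multiple of the monomial of index m, the monomials of
   indices k and k + m differ by a unit and exactly two cosets remain. *)

Lemma rat_int_unit (r : rat) :
  r != 0 -> r \is a Num.int -> r^-1 \is a Num.int -> r = 1 \/ r = -1.
Proof.
move=> r0 /intrP[m Dm] /intrP[n Dn].
have : n * m = 1 by apply: (@intr_inj rat); rewrite intrM -Dn -Dm mulVf.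
by move/intUnitRing.unitzPl; rewrite qualifE Dm => /orP[] /eqP ->; [left | right].
Qed.

Lemma root_monic_rat_int (p : {poly int}) (r : rat) :
  p \is monic -> root (map_poly intr p) r -> r \is a Num.int.
Proof.
move=> mon_p pr0.
have p_ratr : map_poly intr p = map_poly ratr (map_poly intr p) :> {poly algC}.
  by rewrite -map_poly_comp; apply: eq_map_poly => z /=; rewrite ratr_int.
have : ratr r \in Aint.
  apply: (@root_monic_Aint (map_poly intr p)); first by rewrite p_ratr fmorph_root.
    exact: monic_map.
  by apply/polyOverP => i; rewrite coef_map intr_int.
move/(Cint_rat_Aint (Crat_rat r))/intrP => [m Dm].
suff -> : r = m%:~R by exact: intr_int.
by apply: (fmorph_inj (@ratr algC)); rewrite rmorph_int.
Qed.

Section Integrality.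
Variable K : fieldExtType rat.
Implicit Types x y u : K.

Lemma OK_integralOver x : OK x <-> integralOver (intr : int -> K) x.
Proof. by split=> [[p [? ?]] | [p ? ?]]; exists p. Qed.

Lemma OK1 : OK (1 : K).
Proof. exact/OK_integralOver/integral1. Qed.

Lemma OK_mul x y : OK x -> OK y -> OK (x * y).
Proof.
by move=> /OK_integralOver Ox /OK_integralOver Oy; apply/OK_integralOver/integral_mul.
Qed.

Lemma OK_rat_int (r : rat) : OK (r%:A : K) -> r \is a Num.int.
Proof.
case=> p [mon_p pr0]; apply: (@root_monic_rat_int p r mon_p).
rewrite -(fmorph_root (in_alg K)) -map_poly_comp; congr (root _ _): pr0.
by apply: eq_map_poly => z /=; rewrite scaler_int.
Qed.

Lemma OK_sqr_sign u : u ^+ 2 = 1 \/ u ^+ 2 = -1 -> OK u.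
Proof.
case=> u2; [exists ('X^2 - 1) | exists ('X^2 + 1)]; split;
  rewrite ?monicXnsubC ?monicXnaddC //;
  by rewrite (rmorphB, rmorphD) /= map_polyXn rmorph1 rootE !hornerE u2 ?subrr ?addNr.
Qed.

Lemma OK_inv_sqr_sign u : u ^+ 2 = 1 \/ u ^+ 2 = -1 -> OK u^-1.
Proof.
move=> u2; apply: OK_sqr_sign; rewrite exprVn.
by case: u2 => ->; [left; rewrite invr1 | right; rewrite invrN1].
Qed.

Definition OK_unit u : Prop := [/\ u != 0, OK u & OK u^-1].

Lemma OK_unit1 : OK_unit 1.
Proof. by split; rewrite ?oner_neq0 ?invr1 //; apply: OK1. Qed.

Lemma OK_unit_sqr_sign u : u ^+ 2 = 1 \/ u ^+ 2 = -1 -> OK_unit u.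
Proof.
move=> u2; split; [|exact: OK_sqr_sign | exact: OK_inv_sqr_sign].
apply/eqP=> u0; move: u2; rewrite u0 expr0n /=.
by case=> /eqP; rewrite eq_sym ?oppr_eq0 oner_eq0.
Qed.

Lemma OK_unit_sqr_rat u : OK_unit u -> is_rat (u ^+ 2) -> u ^+ 2 = 1 \/ u ^+ 2 = -1.
Proof.
case=> u0 Ou Ou' [r Dr].
have r0 : r != 0.
  by apply: contraNneq u0 => r0; move: Dr; rewrite r0 scale0r => /eqP; rewrite expf_eq0.
have Zr : r \is a Num.int by apply: OK_rat_int; rewrite -Dr expr2; apply: OK_mul.
have Zr' : r^-1 \is a Num.int.
  apply: OK_rat_int; have -> : r^-1%:A = u^-1 ^+ 2 by rewrite exprVn Dr -!in_algE fmorphV.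
  by rewrite expr2; apply: OK_mul.
rewrite Dr; case: (rat_int_unit r0 Zr Zr') => ->.
  by left; rewrite scale1r.
by right; rewrite scaleN1r.
Qed.

End Integrality.

Section Cosets.
Variable K : fieldExtType rat.
Implicit Types rho sigma u : K.

Lemma same_cosetP rho sigma : same_coset rho sigma <->
  exists2 x : rat, x != 0 & exists2 u, OK_unit u & rho = x%:A * sigma * u.
Proof.
split=> [[x [x0 Ex]] | [x x0 [u [u0 Ou Ou'] ->]]]; last first.
  exists x; split=> // y; split=> [[o [Oo ->]] | [_ [[o [Oo ->]] ->]]].
    exists (sigma * (u * o)); split; last by rewrite !mulrA.
    by exists (u * o); split => //; apply: OK_mul.
  exists (u^-1 * o); split; first exact: OK_mul.
  by rewrite -in_algE; field.
have [_ [[o [Oo ->]] Erho]] : rscale x (pideal sigma) rho.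
  by apply/Ex; exists 1; split; [exact: OK1 | rewrite mulr1].
have [o' [Oo' Exs]] : pideal rho (x%:A * sigma).
  by apply/Ex; exists sigma; split => //; exists 1; split; [exact: OK1 | rewrite mulr1].
exists x => //; have [s0 | s0] := eqVneq sigma 0.
  by exists 1; [exact: OK_unit1 | rewrite Erho s0 !(mulr0, mul0r)].
have xs0 : x%:A * sigma != 0 by rewrite mulf_neq0 // -in_algE fmorph_eq0.
have oo1 : o * o' = 1.
  by apply: (mulfI xs0); rewrite mulr1 {2}Exs Erho !mulrA.
exists o; last by rewrite Erho mulrA.
have o0 : o != 0 by apply: contra_eq_neq oo1 => ->; rewrite mul0r eq_sym oner_neq0.
split => //; suff -> : o^-1 = o' by [].
by rewrite -(mulKf o0 o') oo1 mulr1.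
Qed.

Lemma same_coset_sqrt_rat rho sigma :
  sqrt_rat_elt rho -> sqrt_rat_elt sigma -> same_coset rho sigma ->
  exists2 x : rat, x != 0 &
    rho = x%:A * sigma \/ exists2 u, u ^+ 2 = -1 & rho = x%:A * sigma * u.
Proof.
move=> [_ [r Dr]] [s0 [s Ds]] /same_cosetP[x x0 [u Uu Drho]].
have xs0 : x%:A * sigma != 0 by rewrite mulf_neq0 // -in_algE fmorph_eq0.
have Du : u = rho / (x%:A * sigma) by rewrite Drho mulrC mulKf.
have [u1 | uN1] : u ^+ 2 = 1 \/ u ^+ 2 = -1.
  apply: OK_unit_sqr_rat => //; exists (r / (x ^+ 2 * s)).
  by rewrite Du expr_div_n exprMn Dr Ds -!in_algE -rmorphXn -rmorphM -fmorph_div.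
- move/eqP: u1; rewrite sqrf_eq1 => /orP[] /eqP Eu.
    by exists x => //; left; rewrite Drho Eu mulr1.
  by exists (- x); rewrite ?oppr_eq0 //; left; rewrite Drho Eu mulrN1 scaleNr mulNr.
- by exists x => //; right; exists u.
Qed.

Lemma same_coset_scale rho sigma (x : rat) :
  x != 0 -> rho = x%:A * sigma -> same_coset rho sigma.
Proof.
move=> x0 ->; apply/same_cosetP; exists x => //.
by exists 1; [exact: OK_unit1 | rewrite mulr1].
Qed.

End Cosets.

Lemma index_eq_fin (K : fieldExtType rat) (I : finType) (f : I -> K) :
  (forall i, sqrt_rat_elt (f i)) ->
  (forall i j, same_coset (f i) (f j) -> i = j) ->
  (forall rho, sqrt_rat_elt rho -> exists i, same_coset rho (f i)) ->
  index_eq K #|I|.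
Proof.
move=> Sf inj_f cover_f; exists (codom f); rewrite size_codom.
have nth_f i (lt_i : (i < #|I|)%N) : (codom f)`_i = f (enum_val (Ordinal lt_i)).
  exact: (nth_codom 0 f (Ordinal lt_i)).
split=> //; split; first by move=> i lt_i; rewrite nth_f.
split=> [i j lt_i lt_j neq_ij | rho /cover_f[i Ci]].
  by rewrite nth_f nth_f => /inj_f /enum_val_inj [].
by exists (enum_rank i) => //; rewrite (nth_codom 0 f (enum_rank i)) enum_rankK.
Qed.

Lemma free_nth_scale_inj (F : fieldType) (V : vectType F) (s : seq V) (k l : nat) (t : F) :
  free s -> (k < size s)%N -> (l < size s)%N -> s`_k = t *: s`_l -> k = l.
Proof.
move=> fs lt_k lt_l; have fs' : free (in_tuple s) := fs.
move/(congr1 (coord (in_tuple s) (Ordinal lt_k))).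
rewrite linearZ /= !(coord_free (Ordinal _) (Ordinal _) fs') /= eqxx.
by case: eqP => [[->] // | _]; rewrite mulr0 /= => /eqP; rewrite oner_eq0.
Qed.

(* The three equations say that the a-, b- and ab-coordinates of
   (c0 + c1 a + c2 b + c3 ab)^2 vanish. *)
Lemma rat_sqr_coords_single (alpha beta c0 c1 c2 c3 : rat) :
  alpha != 0 -> beta != 0 -> (forall t, alpha * beta != t ^+ 2) ->
  c0 * c1 + c2 * c3 * beta = 0 -> c0 * c2 + c1 * c3 * alpha = 0 -> c0 * c3 + c1 * c2 = 0 ->
  [\/ [/\ c1 = 0, c2 = 0 & c3 = 0], [/\ c0 = 0, c2 = 0 & c3 = 0],
      [/\ c0 = 0, c1 = 0 & c3 = 0] | [/\ c0 = 0, c1 = 0 & c2 = 0]].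
Proof.
move=> al0 be0 nsq E01 E02 E03.
have [z0 | nz0] := eqVneq c0 0.
  rewrite z0 !mul0r !add0r in E01 E02 E03.
  have [z3 | nz3] := eqVneq c3 0.
    by move/eqP: E03; rewrite mulf_eq0 => /orP[] /eqP z; [constructor 3 | constructor 2].
  move/eqP: E01; rewrite !mulf_eq0 (negbTE nz3) (negbTE be0) !orbF => /eqP z2.
  move/eqP: E02; rewrite !mulf_eq0 (negbTE nz3) (negbTE al0) !orbF => /eqP z1.
  by constructor 4.
suff z1 : c1 = 0.
  rewrite z1 !mul0r !addr0 in E02 E03.
  move/eqP: E02; move/eqP: E03; rewrite !mulf_eq0 (negbTE nz0) /= => /eqP z3 /eqP z2.
  by constructor 1.
have : c1 * (c0 ^+ 2 - c3 ^+ 2 * (alpha * beta)) = 0.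
  have -> : c1 * (c0 ^+ 2 - c3 ^+ 2 * (alpha * beta)) =
    c0 * (c0 * c1 + c2 * c3 * beta) - c3 * beta * (c0 * c2 + c1 * c3 * alpha) by ring.
  by rewrite E01 E02; ring.
move/eqP; rewrite mulf_eq0 subr_eq0 => /orP[/eqP // | /eqP E].
have [z3 | nz3] := eqVneq c3 0.
  by move: E; rewrite z3 expr0n /= mul0r => /eqP; rewrite expf_eq0 (negbTE nz0).
by have := nsq (c0 / c3); rewrite expr_div_n E [c3 ^+ 2 * _]mulrC mulfK ?expf_neq0 ?eqxx.
Qed.

Definition addb2 (k l : bool * bool) : bool * bool := (k.1 (+) l.1, k.2 (+) l.2).

Lemma addb2K m k : addb2 (addb2 k m) m = k.
Proof. by case: k => k1 k2; rewrite /addb2 /= !addbK. Qed.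

Lemma klein_transversal m : m != (false, false) ->
  exists2 c, c != (false, false) &
    (forall k, (k \in [:: (false, false); c]) || (addb2 k m \in [:: (false, false); c])) /\
    {in [:: (false, false); c] &, forall j j', j != addb2 j' m}.
Proof.
case: m => [[] []] // _; [exists (true, false) | exists (false, true) | exists (true, false)] => //;
  by split=> [[[] []] | [[] []] [[] []]].
Qed.

Section Biquadratic.
Variables (K : fieldExtType rat) (a b : K) (alpha beta : rat).
Hypotheses (Ha : a ^+ 2 = alpha%:A) (Hb : b ^+ 2 = beta%:A).
Hypothesis basis_ab : basis_of fullv [:: 1; a; b; a * b].
Implicit Types k l : bool * bool.

Definition abpow (k : bool * bool) : K := a ^+ k.1 * b ^+ k.2.

Lemma nth_basis_abpow k : [:: 1; a; b; a * b]`_(k.1 + 2 * k.2) = abpow k.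
Proof. by case: k => [[] []]; rewrite /abpow /= ?mulr1 ?mul1r. Qed.

Lemma abpow_scale_inj k l (t : rat) : abpow k = t%:A * abpow l -> k = l.
Proof.
have lt4 (j : bool * bool) : (j.1 + 2 * j.2 < 4)%N by case: j => [[] []].
rewrite -!nth_basis_abpow mulr_algl => /(free_nth_scale_inj (basis_free basis_ab) (lt4 k) (lt4 l)).
by case: k l => [[] []] [[] []].
Qed.

Lemma abpow_neq0 k : abpow k != 0.
Proof.
rewrite -nth_basis_abpow; apply: (free_not0 (basis_free basis_ab)).
by apply: mem_nth; case: k => [[] []].
Qed.

Lemma abpow_mul k l :
  abpow k * abpow l = (alpha ^+ (k.1 && l.1) * beta ^+ (k.2 && l.2))%:A * abpow (addb2 k l).
Proof.
move: Ha Hb; rewrite -!in_algE => Ha' Hb'.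
by case: k l => [[] []] [[] []]; rewrite /abpow /= -in_algE; ring: Ha' Hb'.
Qed.

Lemma abpow0 : abpow (false, false) = 1.
Proof. by rewrite /abpow /= !expr0 mulr1. Qed.

Lemma abpow_sqr k : abpow k ^+ 2 = (alpha ^+ k.1 * beta ^+ k.2)%:A.
Proof. by rewrite expr2 abpow_mul !andbb /addb2 !addbb abpow0 mulr1. Qed.

Lemma sqrt_rat_elt_abpow k : sqrt_rat_elt (abpow k).
Proof. by split; [exact: abpow_neq0 | exists (alpha ^+ k.1 * beta ^+ k.2); rewrite abpow_sqr]. Qed.

Lemma biquad_nonsquare : [/\ alpha != 0, beta != 0 & forall t, alpha * beta != t ^+ 2].
Proof.
have sqr_neq0 k : (alpha ^+ k.1 * beta ^+ k.2)%:A != 0 :> K.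
  by rewrite -abpow_sqr expf_neq0 ?abpow_neq0.
split; first by have := sqr_neq0 (true, false); rewrite /= expr1 expr0 mulr1 -in_algE fmorph_eq0.
  by have := sqr_neq0 (false, true); rewrite /= expr1 expr0 mul1r -in_algE fmorph_eq0.
move=> t; apply/eqP => Et.
have abpow11_rat s : abpow (true, true) != s%:A.
  apply/eqP => E; have := @abpow_scale_inj (true, true) (false, false) s.
  by rewrite abpow0 mulr1 => /(_ E).
have : abpow (true, true) ^+ 2 == (t%:A) ^+ 2.
  by apply/eqP; rewrite abpow_sqr /= !expr1 Et -in_algE rmorphXn.
by rewrite eqf_sqr -scaleNr !(negbTE (abpow11_rat _)).
Qed.

Lemma basis_coords rho :
  exists c0 c1 c2 c3 : rat, rho = c0%:A + c1%:A * a + c2%:A * b + c3%:A * (a * b).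
Proof.
have := coord_basis (X := in_tuple [:: 1; a; b; a * b]) basis_ab (memvf rho).
rewrite !big_ord_recl big_ord0 addr0 /= => ->.
by do 4 eexists; rewrite !mulr_algl !addrA.
Qed.

Lemma basis_coords_eq0 c0 c1 c2 c3 :
  c0%:A + c1%:A * a + c2%:A * b + c3%:A * (a * b) = 0 -> [/\ c0 = 0, c1 = 0, c2 = 0 & c3 = 0].
Proof.
rewrite !mulr_algl => E.
have /freeP free_ab : free (in_tuple [:: 1; a; b; a * b]) by exact: basis_free basis_ab.
have := free_ab (fun i : 'I_4 => [:: c0; c1; c2; c3]`_i).
rewrite !big_ord_recl big_ord0 addr0 /= !addrA E => /(_ erefl) c_0.
by split; [exact: (c_0 0) | exact: (c_0 1) | exact: (c_0 2) | exact: (c_0 3)].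
Qed.

Lemma sqrt_rat_elt_scale_abpow rho :
  sqrt_rat_elt rho -> exists k, exists2 q : rat, q != 0 & rho = q%:A * abpow k.
Proof.
move=> [rho0 [r Dr]]; have [al0 be0 nsq] := biquad_nonsquare.
suff [k [q Dq]] : exists k, exists q : rat, rho = q%:A * abpow k.
  by exists k, q => //; apply: contraNneq rho0 => q0; rewrite Dq q0 scale0r mul0r.
have [c0 [c1 [c2 [c3 Drho]]]] := basis_coords rho.
have : (c0 ^+ 2 + c1 ^+ 2 * alpha + c2 ^+ 2 * beta + c3 ^+ 2 * (alpha * beta) - r)%:A
   + (2 * (c0 * c1 + c2 * c3 * beta))%:A * a + (2 * (c0 * c2 + c1 * c3 * alpha))%:A * b
   + (2 * (c0 * c3 + c1 * c2))%:A * (a * b) = rho ^+ 2 - r%:A.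
  by move: Ha Hb; rewrite Drho -!in_algE => Ha' Hb'; ring: Ha' Hb'.
have half (x : rat) : 2 * x = 0 -> x = 0 by move/eqP; rewrite mulf_eq0 pnatr_eq0 => /eqP.
rewrite Dr subrr => /basis_coords_eq0[_ /half E01 /half E02 /half E03].
have [[z1 z2 z3] | [z0 z2 z3] | [z0 z1 z3] | [z0 z1 z2]] :=
  rat_sqr_coords_single al0 be0 nsq E01 E02 E03;
  [ exists (false, false), c0 | exists (true, false), c1
  | exists (false, true), c2 | exists (true, true), c3];
  by rewrite Drho ?z0 ?z1 ?z2 ?z3 /abpow /= -!in_algE; ring.
Qed.

Lemma same_coset_abpow k l : same_coset (abpow k) (abpow l) -> k = l \/ exists u : K, u ^+ 2 = -1.
Proof.
move/(same_coset_sqrt_rat (sqrt_rat_elt_abpow k) (sqrt_rat_elt_abpow l)).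
by case=> x _ [/abpow_scale_inj | [u u2 _]]; [left | right; exists u].
Qed.

Section Gaussian.
Variables (i : K) (m : bool * bool) (qi : rat).
Hypotheses (Hi : i ^+ 2 = -1) (qi0 : qi != 0) (Di : i = qi%:A * abpow m).

Lemma gaussian_index_neq0 : m != (false, false).
Proof.
apply/eqP=> m0; have : (qi ^+ 2)%:A = (-1)%:A :> K.
  by rewrite scaleN1r -Hi Di m0 abpow0 mulr1 -!in_algE rmorphXn.
move/(fmorph_inj (in_alg K))/eqP; apply/negP.
by rewrite gt_eqF // (lt_le_trans _ (sqr_ge0 qi)) // oppr_lt0.
Qed.

Lemma abpow_addb2_gaussian j : exists2 x : rat, x != 0 & abpow (addb2 j m) = x%:A * abpow j * i.
Proof.
have [al0 be0 _] := biquad_nonsquare.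
exists (alpha ^+ (j.1 && m.1) * beta ^+ (j.2 && m.2) * qi)^-1.
  by rewrite invr_eq0 !mulf_neq0 ?expf_neq0.
have Emul := abpow_mul j m; rewrite -in_algE rmorphM in Emul.
rewrite Di -!in_algE fmorphV !rmorphM; field: Emul.
by rewrite !fmorph_eq0 qi0 !expf_neq0.
Qed.

Lemma same_coset_abpow_gaussian k l : same_coset (abpow k) (abpow l) -> k = l \/ k = addb2 l m.
Proof.
move/(same_coset_sqrt_rat (sqrt_rat_elt_abpow k) (sqrt_rat_elt_abpow l)).
case=> x _ [/abpow_scale_inj | [u u2 Dk]]; [by left | right].
have [y y0 Dl] := abpow_addb2_gaussian l.
have /eqP : u ^+ 2 = i ^+ 2 by rewrite u2 Hi.
rewrite eqf_sqr => /orP[] /eqP Du.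
  apply: (@abpow_scale_inj _ _ (x / y)).
  by rewrite Dk Du Dl -!in_algE fmorph_div; field; rewrite fmorph_eq0.
apply: (@abpow_scale_inj _ _ (- (x / y))).
by rewrite Dk Du Dl -!in_algE rmorphN fmorph_div; field; rewrite fmorph_eq0.
Qed.

Lemma sqrt_rat_elt_coset_gaussian c :
    (forall k, (k \in [:: (false, false); c]) || (addb2 k m \in [:: (false, false); c])) ->
  forall rho, sqrt_rat_elt rho ->
  exists2 j, j \in [:: (false, false); c] & same_coset rho (abpow j).
Proof.
move=> cover rho /sqrt_rat_elt_scale_abpow[k [q q0 Drho]].
case/orP: (cover k) => [k_in | km_in]; first by exists k => //; apply: same_coset_scale q0 Drho.
exists (addb2 k m) => //; apply/same_cosetP.
have [y y0] := abpow_addb2_gaussian (addb2 k m); rewrite addb2K => Dk.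
exists (q * y); first by rewrite mulf_neq0.
exists i; first by apply: OK_unit_sqr_sign; right.
by rewrite Drho Dk -!in_algE rmorphM; ring.
Qed.

End Gaussian.

End Biquadratic.

Theorem mainTheorem9 (K : fieldExtType rat) :
  biquadratic K ->
  ((~ exists i : K, i ^+ 2 = -1) -> index_eq K 4) /\
  ((exists i : K, i ^+ 2 = -1) -> index_eq K 2).
Proof.
case=> dimK [a [b [[alpha Ha] [[beta Hb] span_ab]]]].
have basis_ab : basis_of fullv [:: 1; a; b; a * b] by rewrite basisEdim span_ab subvv dimK.
have S_abpow := sqrt_rat_elt_abpow Ha Hb basis_ab.
have cover_abpow := sqrt_rat_elt_scale_abpow Ha Hb basis_ab.
split=> [no_i | [i Hi]].
  have := index_eq_fin S_abpow; rewrite card_prod card_bool; apply.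
    by move=> k l /(same_coset_abpow Ha Hb basis_ab) [// | /no_i].
  by move=> rho /cover_abpow[k [q q0 Drho]]; exists k; apply: same_coset_scale q0 Drho.
have [i0 _ _] := OK_unit_sqr_sign (or_intror Hi).
have [m [qi qi0 Di]] : exists m, exists2 qi : rat, qi != 0 & i = qi%:A * abpow a b m.
  by apply: cover_abpow; split=> //; exists (-1); rewrite Hi scaleN1r.
have [c c0 [cover distinct]] := klein_transversal (gaussian_index_neq0 Hi Di).
have uniq_c : uniq [:: (false, false); c] by rewrite /= inE eq_sym c0.
have := @index_eq_fin _ (seq_sub [:: (false, false); c]) (fun j => abpow a b (val j)).
rewrite card_seq_sub //; apply=> [j | j j' | rho].
- exact: S_abpow.
- move/(same_coset_abpow_gaussian Ha Hb basis_ab Hi qi0 Di) => [/val_inj // | Ej].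
  by have := distinct _ _ (valP j) (valP j'); rewrite Ej eqxx.
- move/(sqrt_rat_elt_coset_gaussian Ha Hb basis_ab Hi qi0 Di cover) => [j j_in Cj].
  by exists (SeqSub j_in).
Qed.
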